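(* Let $a>0$, $b>0$, $c>0$, $P>0$, $\mu>0$ be constants and set $\lambda_a=ac$, $\tilde\lambda_a=a(b+c)$. For $\gamma>0$ define $$\Delta(\gamma)=\frac{e^{\gamma P/\lambda_a}-1}{e^{\gamma P/\tilde\lambda_a}-1},\qquad \hat\Delta(\gamma)=\exp\!\Big(\gamma P\,\frac{\tilde\lambda_a-\lambda_a}{\tilde\lambda_a\lambda_a}\Big),$$ and for a positive function $D$ on $(0,\infty)$ let $$J[D]=\int_0^{\infty}\Big(1-\frac{ab}{\gamma P}\,D(\gamma)^{-c/b}\big(e^{\gamma P/(a(b+c))}-1\big)\Big)\frac{1}{\mu}e^{-\gamma/\mu}\,d\gamma.$$ Then $\Delta(\gamma)>\hat\Delta(\gamma)$ for every $\gamma>0$, and $$J[\hat\Delta]=1+\frac{ab}{P\mu}\ln\!\Big(\frac{a(b+c)}{a(b+c)+P\mu}\Big)<J[\Delta].$$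
   Context: In the paper, $a=l_{rw}\theta_r$ (path loss to the warden times $\theta_r=\sum_n\beta_r^n$, the total reflection amplitude-squared of the STAR-RIS), $b=\varpi_b=\mathbf w_b^H\mathbf w_b$, $c=\varpi_c=\mathbf w_c^H\mathbf w_c$, $P=P_j^{\max}$, and $\mu=\lambda_{rw}=\|\boldsymbol\Theta_t\mathbf h_{rc}^*\|_2^2$; the quantity $\gamma$ is exponentially distributed with mean $\mu$. $J[\Delta]$ is the (asymptotic) average minimum detection error probability $\overline P^*_{ea}$ of the warden and $J[\hat\Delta]=\hat P^*_{ea}$ is its lower bound used as the covertness constraint. *)

From Stdlib Require Import Reals.
From Coquelicot Require Import Coquelicot.
Open Scope R_scope.

Definition lam_a (a c : R) : R := a * c.
Definition lamt_a (a b c : R) : R := a * (b + c).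

Definition DeltaF (a b c P : R) (g : R) : R :=
  (exp (g * P / lam_a a c) - 1) / (exp (g * P / lamt_a a b c) - 1).

Definition Delta_hat (a b c P : R) (g : R) : R :=
  exp (g * P * ((lamt_a a b c - lam_a a c) / (lamt_a a b c * lam_a a c))).

(* integrand of J[D]; D(g)^(-c/b) is Rpower (D g) (-c/b) (D positive) *)
Definition J_integrand (a b c P mu : R) (D : R -> R) (g : R) : R :=
  (1 - a * b / (g * P) * Rpower (D g) (- c / b) * (exp (g * P / (a * (b + c))) - 1))
  * (1 / mu * exp (- g / mu)).

Definition J_is (a b c P mu : R) (D : R -> R) (v : R) : Prop :=
  is_RInt_gen (J_integrand a b c P mu D) (at_right 0) (Rbar_locally p_infty) v.

From Stdlib Require Import Reals Lra Classical.
From Coquelicot Require Import Coquelicot.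
Open Scope R_scope.

(* With [v = gP/(a(b+c))] and [u = gP/(ac)] we have [Delta_hat = e^(u-v)] and
   [Delta = (e^u - 1)/(e^v - 1)]; since [e^v > 1] the inequality
   [Delta > Delta_hat] is just [e^u - 1 > e^u - e^(u-v)].
   The integrand of [J[D]] is [m(g) - h_D(g)], where [m] is the exponential
   density of mean [mu] (integral 1) and [h_D >= 0].  For [D = Delta_hat],
   [h_D(g) = C (e^(-al g) - e^(-be g))/g] with [C = ab/(P mu)], [al = 1/mu],
   [be = 1/mu + P/(a(b+c))]: a Frullani integrand, whose integral over
   (0,oo) is [ln (be/al)].
   Since [Delta > Delta_hat] and [-c/b < 0], [0 <= h_Delta < h_Delta_hat]; a
   positive continuous function dominated by an integrable one has a positive
   improper integral (the least upper bound of its partial integrals), hence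
   [J[Delta] = J[Delta_hat] + I] with [I > 0]. *)

(** * Improper integrals over (0, +oo) *)

Notation is_RInt_pos f l := (is_RInt_gen f (at_right 0) (Rbar_locally p_infty) l).

Lemma ex_RInt_pos (f : R -> R) x y :
  (forall z, 0 < z -> continuous f z) -> 0 < x -> 0 < y -> ex_RInt f x y.
Proof.
  intros Hc Hx Hy. apply (@ex_RInt_continuous R_CompleteNormedModule).
  intros z Hz. apply Hc.
  assert (0 < Rmin x y) by (apply Rmin_glb_lt; lra). lra.
Qed.

Lemma at_right_0_lt (d : R) : 0 < d -> at_right 0 (fun x => 0 < x < d).
Proof.
  intros Hd. exists (mkposreal d Hd). intros x Hx Hpos. simpl in *.
  unfold ball in Hx; simpl in Hx; unfold AbsRing_ball, abs, minus, plus, opp in Hx; simpl in Hx.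
  rewrite Ropp_0, Rplus_0_r in Hx. apply Rabs_lt_between in Hx. lra.
Qed.

Lemma is_RInt_pos_of_lim (f : R -> R) l :
  (forall z, 0 < z -> continuous f z) ->
  filterlim (fun p => RInt f (fst p) (snd p))
    (filter_prod (at_right 0) (Rbar_locally p_infty)) (locally l) ->
  is_RInt_pos f l.
Proof.
  intros Hc Hl. apply (filterlimi_lim_ext_loc (fun p => RInt f (fst p) (snd p))); [|exact Hl].
  apply (Filter_prod _ _ _ (fun x => 0 < x < 1) (fun y => 0 < y)).
  - apply at_right_0_lt; lra.
  - exists 0; auto.
  - intros x y Hx Hy; simpl. apply (@RInt_correct R_CompleteNormedModule).
    apply ex_RInt_pos; auto; lra.
Qed.

Lemma lim_of_linear_rate (I : R * R -> R) l K : 0 <= K ->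
  (forall x y, 0 < x -> 1 < y -> Rabs (I (x, y) - l) <= K * x + K / y) ->
  filterlim I (filter_prod (at_right 0) (Rbar_locally p_infty)) (locally l).
Proof.
  intros HK Hrate. apply filterlim_locally. intros eps.
  assert (He := cond_pos eps).
  set (d := eps / (2 * (K + 1))).
  assert (Hd : 0 < d) by (unfold d; apply Rdiv_lt_0_compat; lra).
  assert (HKd : K * d < eps / 2).
  { unfold d, Rdiv. rewrite Rinv_mult.
    assert (0 < / (K + 1)) by (apply Rinv_0_lt_compat; lra).
    assert (K * / (K + 1) < 1).
    { apply (Rmult_lt_reg_r (K + 1)); [lra|]. rewrite Rmult_assoc, Rinv_l by lra. lra. }
    nra. }
  apply (Filter_prod _ _ _ (fun x => 0 < x < d) (fun y => Rmax 1 (/ d) < y)).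
  - apply at_right_0_lt, Hd.
  - exists (Rmax 1 (/ d)). auto.
  - intros x y [Hx0 Hxd] Hy.
    unfold ball; simpl; unfold AbsRing_ball, abs, minus, plus, opp; simpl.
    assert (Hy1 : 1 < y) by (eapply Rle_lt_trans; [apply Rmax_l|exact Hy]).
    assert (Hyd : / d < y) by (eapply Rle_lt_trans; [apply Rmax_r|exact Hy]).
    assert (Hx : K * x <= K * d) by (apply Rmult_le_compat_l; lra).
    assert (Hinv : K / y <= K * d).
    { unfold Rdiv. apply Rmult_le_compat_l; [lra|].
      rewrite <- (Rinv_inv d). apply Rinv_le_contravar; [apply Rinv_0_lt_compat|]; lra. }
    specialize (Hrate x y Hx0 Hy1). fold (Rminus (I (x, y)) l). lra.
Qed.

Lemma is_RInt_pos_ext (f g : R -> R) l :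
  (forall x, 0 < x -> f x = g x) -> is_RInt_pos f l -> is_RInt_pos g l.
Proof.
  intros Hfg. apply is_RInt_gen_ext.
  apply (Filter_prod _ _ _ (fun x => 0 < x < 1) (fun y => 0 < y)).
  - apply at_right_0_lt; lra.
  - exists 0; auto.
  - intros x y Hx Hy z Hz. simpl in Hz. apply Hfg.
    assert (0 < Rmin x y) by (apply Rmin_glb_lt; lra). lra.
Qed.

Lemma is_RInt_pos_of_bounded (f : R -> R) B :
  (forall x, 0 < x -> continuous f x) -> (forall x, 0 < x -> 0 <= f x) ->
  (forall x y, 0 < x -> x <= y -> RInt f x y <= B) ->
  exists L, is_RInt_pos f L /\ (forall x y, 0 < x -> x <= y -> RInt f x y <= L).
Proof.
  intros Hc Hp HB.
  set (E := fun r => exists x y, 0 < x /\ x <= y /\ r = RInt f x y).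
  assert (Hb : bound E) by (exists B; intros r (x & y & Hx & Hxy & ->); auto).
  assert (Hne : exists r, E r) by (exists (RInt f 1 1), 1, 1; repeat split; lra).
  destruct (completeness E Hb Hne) as [L [Hub Hlub]].
  assert (HL : forall x y, 0 < x -> x <= y -> RInt f x y <= L)
    by (intros x y Hx Hxy; apply Hub; exists x, y; auto).
  assert (Hchasles : forall x x' y' y, 0 < x -> x <= x' -> x' <= y' -> y' <= y ->
            RInt f x' y' <= RInt f x y).
  { intros x x' y' y Hx Hxx Hxy Hyy.
    rewrite <- (RInt_Chasles f x x' y), <- (RInt_Chasles f x' y' y)
      by (apply ex_RInt_pos; auto; lra).
    assert (0 <= RInt f x x')
      by (apply RInt_ge_0; [lra|apply ex_RInt_pos; auto; lra|intros; apply Hp; lra]).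
    assert (0 <= RInt f y' y)
      by (apply RInt_ge_0; [lra|apply ex_RInt_pos; auto; lra|intros; apply Hp; lra]).
    unfold plus; simpl. lra. }
  exists L. split; [|exact HL].
  apply is_RInt_pos_of_lim; auto.
  apply filterlim_locally. intros eps. assert (He := cond_pos eps).
  assert (Happrox : exists r, E r /\ L - eps < r).
  { apply NNPP. intros Hn. assert (L <= L - eps); [|lra].
    apply Hlub. intros r Hr. apply Rnot_lt_le. intros Hlt. apply Hn. exists r; auto. }
  destruct Happrox as [r [(x0 & y0 & Hx0 & Hxy0 & ->) Hr]].
  apply (Filter_prod _ _ _ (fun x => 0 < x < x0) (fun y => y0 < y)).
  - apply at_right_0_lt; lra.
  - exists y0; auto.
  - intros x y [Hx Hxx] Hy. simpl.
    unfold ball; simpl; unfold AbsRing_ball, abs, minus, plus, opp; simpl.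
    assert (RInt f x0 y0 <= RInt f x y) by (apply Hchasles; lra).
    assert (RInt f x y <= L) by (apply HL; lra).
    apply Rabs_def1; lra.
Qed.

Lemma is_RInt_pos_dominated (f g : R -> R) B :
  (forall x, 0 < x -> continuous f x) -> (forall x, 0 < x -> continuous g x) ->
  (forall x, 0 < x -> 0 < f x <= g x) ->
  (forall x y, 0 < x -> x <= y -> RInt g x y <= B) ->
  exists L, is_RInt_pos f L /\ 0 < L.
Proof.
  intros Hcf Hcg Hfg HB.
  destruct (is_RInt_pos_of_bounded f B) as [L [HfL HLb]]; auto.
  - intros x Hx. apply Rlt_le, Hfg, Hx.
  - intros x y Hx Hxy. apply Rle_trans with (RInt g x y); [|auto].
    apply RInt_le; auto; try (apply ex_RInt_pos; auto; lra).
    intros z Hz. apply Hfg. lra.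
  - exists L. split; [exact HfL|].
    apply Rlt_le_trans with (RInt f 1 2); [|apply HLb; lra].
    apply RInt_gt_0; [lra| |]; intros; [apply Hfg|apply Hcf]; lra.
Qed.

Lemma exp_neg_ge (t : R) : 1 - t <= exp (- t).
Proof. generalize (exp_ineq1_le (- t)). lra. Qed.

Lemma exp_neg_le_1 (t : R) : 0 <= t -> exp (- t) <= 1.
Proof.
  intros Ht. rewrite <- exp_0. destruct (Req_dec t 0) as [->|Hne].
  - rewrite Ropp_0. lra.
  - apply Rlt_le, exp_increasing. lra.
Qed.

Lemma exp_neg_le_inv (t : R) : 0 < t -> exp (- t) <= / t.
Proof.
  intros Ht. rewrite exp_Ropp. apply Rinv_le_contravar; [exact Ht|].
  generalize (exp_ineq1_le t). lra.
Qed.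

Definition exp_density (mu g : R) : R := 1 / mu * exp (- g / mu).

Lemma exp_density_RInt mu x y : 0 < mu ->
  RInt (exp_density mu) x y = exp (- x / mu) - exp (- y / mu).
Proof.
  intros Hmu. apply is_RInt_unique.
  replace (exp (- x / mu) - exp (- y / mu)) with
    (minus ((fun g => - exp (- g / mu)) y) ((fun g => - exp (- g / mu)) x))
    by (unfold minus, plus, opp; simpl; ring).
  apply (@is_RInt_derive R_CompleteNormedModule (fun g => - exp (- g / mu))).
  - intros z Hz. auto_derive; auto. unfold exp_density, Rdiv. ring.
  - intros z Hz. apply (@ex_derive_continuous R_AbsRing R_NormedModule). unfold exp_density. auto_derive. auto.
Qed.

Lemma exp_density_integral mu : 0 < mu -> is_RInt_pos (exp_density mu) 1.
Proof.
  intros Hmu. apply is_RInt_pos_of_lim.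
  { intros z Hz. apply (@ex_derive_continuous R_AbsRing R_NormedModule). unfold exp_density. auto_derive. auto. }
  apply (lim_of_linear_rate _ _ (1 / mu + mu)).
  { assert (0 < 1 / mu) by (apply Rdiv_lt_0_compat; lra). lra. }
  intros x y Hx Hy. simpl. rewrite exp_density_RInt by exact Hmu.
  assert (Hxmu : 0 < x / mu) by (apply Rdiv_lt_0_compat; lra).
  assert (Hymu : 0 < y / mu) by (apply Rdiv_lt_0_compat; lra).
  replace (- x / mu) with (- (x / mu)) by (unfold Rdiv; ring).
  replace (- y / mu) with (- (y / mu)) by (unfold Rdiv; ring).
  assert (E1 := exp_neg_ge (x / mu)).
  assert (E2 := exp_neg_le_1 (x / mu) (Rlt_le _ _ Hxmu)).
  assert (E3 := exp_neg_le_inv (y / mu) Hymu).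
  assert (E4 : 0 < exp (- (y / mu))) by apply exp_pos.
  replace (/ (y / mu)) with (mu / y) in E3 by (field; lra).
  assert (0 <= mu * x) by nra.
  assert (0 <= 1 / mu / y) by (apply Rdiv_le_0_compat; [apply Rdiv_le_0_compat|]; lra).
  replace ((1 / mu + mu) * x) with (x / mu + mu * x) by (field; lra).
  replace ((1 / mu + mu) / y) with (1 / mu / y + mu / y) by (field; lra).
  apply Rabs_le. split; lra.
Qed.

Lemma RInt_inv p q : 0 < p -> 0 < q -> RInt (fun u => / u) p q = ln q - ln p.
Proof.
  intros Hp Hq. apply is_RInt_unique.
  assert (0 < Rmin p q) by (apply Rmin_glb_lt; lra).
  apply (@is_RInt_derive R_CompleteNormedModule ln (fun u => / u)).
  - intros x Hx. apply is_derive_ln. lra.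
  - intros x Hx. apply (@ex_derive_continuous R_AbsRing R_NormedModule). auto_derive. lra.
Qed.

Section Frullani.
Variables al be : R.
Hypotheses (Hal : 0 < al) (Hab : al < be).

Definition frullani (g : R) : R := (exp (- (al * g)) - exp (- (be * g))) / g.

(* The kernel [e^(-u)/u] and its integral over [al t, be t]; the partial
   integrals of [frullani] telescope into differences of [tail t]. *)
Definition expinv (u : R) : R := exp (- u) / u.
Definition tail (t : R) : R := RInt expinv (al * t) (be * t).

Lemma continuous_expinv z : 0 < z -> continuous expinv z.
Proof. intros Hz. apply (@ex_derive_continuous R_AbsRing R_NormedModule). unfold expinv. auto_derive. lra. Qed.

Lemma continuous_frullani z : 0 < z -> continuous frullani z.
Proof. intros Hz. apply (@ex_derive_continuous R_AbsRing R_NormedModule). unfold frullani. auto_derive. lra. Qed.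

Lemma ln_ratio_nonneg : 0 <= ln (be / al).
Proof.
  rewrite <- ln_1. apply Rlt_le, ln_increasing; [lra|].
  apply (Rmult_lt_reg_r al); auto. unfold Rdiv. rewrite Rmult_assoc, Rinv_l; lra.
Qed.

(* Bounding [e^(-u)] on [al t, be t] by its extreme values, since
   [int_(al t)^(be t) du/u = ln (be/al)]. *)
Lemma tail_bounds t : 0 < t ->
  exp (- (be * t)) * ln (be / al) <= tail t <= exp (- (al * t)) * ln (be / al).
Proof.
  intros Ht.
  assert (Hl : ln (be / al) = RInt (fun u => / u) (al * t) (be * t)).
  { rewrite RInt_inv by nra. rewrite !ln_mult by lra. rewrite ln_div by lra. ring. }
  assert (Hinv : ex_RInt (fun u => / u) (al * t) (be * t)).
  { apply ex_RInt_pos; try nra. intros z Hz.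
    apply (@ex_derive_continuous R_AbsRing R_NormedModule). auto_derive. lra. }
  assert (Hscal : forall k, k * RInt (fun u => / u) (al * t) (be * t)
                              = RInt (fun u => k * / u) (al * t) (be * t))
    by (intros k; symmetry; exact (RInt_scal (V:=R_CompleteNormedModule) _ _ _ k Hinv)).
  assert (Hexp : forall k, ex_RInt (fun u => k * / u) (al * t) (be * t))
    by (intros k; exact (ex_RInt_scal (V:=R_CompleteNormedModule) _ _ _ k Hinv)).
  rewrite Hl, !Hscal. unfold tail.
  split; apply RInt_le; try nra; auto; try (apply ex_RInt_pos; [exact continuous_expinv|nra|nra]);
    intros x Hx; unfold expinv, Rdiv;
    (apply Rmult_le_compat_r; [apply Rlt_le, Rinv_0_lt_compat; nra|]);
    apply Rlt_le, exp_increasing; lra.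
Qed.

Lemma RInt_exp_scaled k x y : 0 < k -> 0 < x -> 0 < y ->
  RInt (fun g => exp (- (k * g)) / g) x y = RInt expinv (k * x) (k * y).
Proof.
  intros Hk Hx Hy.
  assert (H := RInt_comp_lin (V:=R_CompleteNormedModule) expinv k 0 x y).
  rewrite !Rplus_0_r in H.
  rewrite <- H by (apply ex_RInt_pos; [exact continuous_expinv|nra|nra]).
  apply RInt_ext. intros z Hz.
  assert (0 < Rmin x y) by (apply Rmin_glb_lt; lra).
  unfold scal; simpl; unfold mult; simpl; unfold expinv. rewrite Rplus_0_r.
  field. split; nra.
Qed.

(* Partial integrals of [frullani], via the substitutions [u = al g], [u = be g]. *)
Lemma RInt_frullani x y : 0 < x -> 0 < y -> RInt frullani x y = tail x - tail y.
Proof.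
  intros Hx Hy.
  assert (Hex : forall k, 0 < k -> ex_RInt (fun g => exp (- (k * g)) / g) x y).
  { intros k Hk. apply ex_RInt_pos; auto. intros z Hz.
    apply (@ex_derive_continuous R_AbsRing R_NormedModule). auto_derive. lra. }
  transitivity (RInt (fun g => minus (exp (- (al * g)) / g) (exp (- (be * g)) / g)) x y).
  { apply RInt_ext. intros z Hz.
    assert (0 < Rmin x y) by (apply Rmin_glb_lt; lra).
    unfold frullani, minus, plus, opp; simpl. field. lra. }
  rewrite (RInt_minus (V:=R_CompleteNormedModule)) by (apply Hex; lra).
  rewrite !RInt_exp_scaled by lra. unfold tail.
  assert (Hk : forall p q, 0 < p -> 0 < q -> ex_RInt expinv p q)
    by (intros; apply ex_RInt_pos; auto; exact continuous_expinv).
  rewrite <- (RInt_Chasles (V:=R_CompleteNormedModule) expinv (al * x) (be * x) (al * y))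
    by (apply Hk; nra).
  rewrite <- (RInt_Chasles (V:=R_CompleteNormedModule) expinv (be * x) (al * y) (be * y))
    by (apply Hk; nra).
  unfold minus, plus, opp; simpl. ring.
Qed.

Lemma RInt_frullani_le x y : 0 < x -> 0 < y -> RInt frullani x y <= ln (be / al).
Proof.
  intros Hx Hy. rewrite RInt_frullani by lra.
  destruct (tail_bounds x) as [_ Hx2]; [lra|].
  destruct (tail_bounds y) as [Hy1 _]; [lra|].
  assert (HL := ln_ratio_nonneg).
  assert (E1 := exp_neg_le_1 (al * x) ltac:(nra)).
  assert (E2 : 0 <= exp (- (be * y))) by (apply Rlt_le, exp_pos).
  nra.
Qed.

(* Frullani's theorem: the tails tend to [ln (be/al)] at 0 and to 0 at +oo. *)
Lemma frullani_integral : is_RInt_pos frullani (ln (be / al)).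
Proof.
  assert (HL := ln_ratio_nonneg).
  set (L := ln (be / al)) in *.
  apply is_RInt_pos_of_lim; [exact continuous_frullani|].
  apply (lim_of_linear_rate _ _ (be * L + L / al)).
  { assert (0 <= L / al) by (apply Rdiv_le_0_compat; lra). nra. }
  intros x y Hx Hy. simpl. rewrite RInt_frullani by lra.
  destruct (tail_bounds x) as [G1 G2]; [lra|].
  destruct (tail_bounds y) as [G3 G4]; [lra|].
  fold L in G1, G2, G3, G4.
  assert (E1 := exp_neg_ge (be * x)).
  assert (E2 := exp_neg_le_1 (al * x) ltac:(nra)).
  assert (E3 := exp_neg_le_inv (al * y) ltac:(nra)).
  assert (E4 : 0 <= exp (- (be * y))) by (apply Rlt_le, exp_pos).
  assert (E5 : exp (- (al * y)) * L <= L / al / y).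
  { replace (L / al / y) with (/ (al * y) * L) by (field; lra).
    apply Rmult_le_compat_r; lra. }
  assert (0 <= be * L / y) by (apply Rdiv_le_0_compat; nra).
  assert (0 <= L / al * x) by (apply Rmult_le_pos; [apply Rdiv_le_0_compat|]; lra).
  replace ((be * L + L / al) / y) with (be * L / y + L / al / y) by (field; lra).
  apply Rabs_le. split; nra.
Qed.

End Frullani.

(** * The covertness model *)

Section Model.
Variables a b c P mu : R.
Hypotheses (ha : 0 < a) (hb : 0 < b) (hc : 0 < c) (hP : 0 < P) (hmu : 0 < mu).

Lemma exponents_order g : 0 < g -> 0 < g * P / (a * (b + c)) < g * P / (a * c).
Proof.
  intros Hg. split.
  - apply Rdiv_lt_0_compat; nra.
  - unfold Rdiv. apply Rmult_lt_compat_l; [nra|].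
    apply Rinv_lt_contravar; [apply Rmult_lt_0_compat; apply Rmult_lt_0_compat; lra|nra].
Qed.

Lemma Delta_hat_exp g : Delta_hat a b c P g = exp (g * P / (a * c) - g * P / (a * (b + c))).
Proof. unfold Delta_hat, lam_a, lamt_a. f_equal. field. repeat split; try lra; nra. Qed.

(* First claim: [(e^u - 1)/(e^v - 1) > e^(u-v)], i.e. [e^u - 1 > e^u - e^(u-v)]. *)
Lemma Delta_gt_Delta_hat g : 0 < g -> DeltaF a b c P g > Delta_hat a b c P g.
Proof.
  intros Hg. destruct (exponents_order g Hg) as [Hv Hvu].
  rewrite Delta_hat_exp. unfold DeltaF, lam_a, lamt_a.
  set (u := g * P / (a * c)) in *. set (v := g * P / (a * (b + c))) in *.
  assert (Hev : 1 < exp v) by (rewrite <- exp_0; apply exp_increasing; lra).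
  assert (Heuv : 1 < exp (u - v)) by (rewrite <- exp_0; apply exp_increasing; lra).
  apply Rlt_gt. apply (Rmult_lt_reg_r (exp v - 1)); [lra|].
  unfold Rdiv. rewrite Rmult_assoc, Rinv_l, Rmult_1_r by lra.
  rewrite Rmult_minus_distr_l, <- exp_plus. replace (u - v + v) with u by ring. lra.
Qed.

Definition penalty (D : R -> R) (g : R) : R :=
  a * b / (g * P) * Rpower (D g) (- c / b) * (exp (g * P / (a * (b + c))) - 1)
  * exp_density mu g.

Lemma J_integrand_split D g :
  J_integrand a b c P mu D g = minus (exp_density mu g) (penalty D g).
Proof. unfold J_integrand, penalty, exp_density, minus, plus, opp; simpl. ring. Qed.

Lemma penalty_nonneg D g : 0 < g -> 0 <= penalty D g.
Proof.
  intros Hg. destruct (exponents_order g Hg) as [Hv _].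
  unfold penalty, Rpower, exp_density.
  assert (0 < a * b / (g * P)) by (apply Rdiv_lt_0_compat; nra).
  assert (1 < exp (g * P / (a * (b + c)))) by (rewrite <- exp_0; apply exp_increasing; lra).
  assert (0 < exp (- c / b * ln (D g))) by apply exp_pos.
  assert (0 < 1 / mu) by (apply Rdiv_lt_0_compat; lra).
  assert (0 < exp (- g / mu)) by apply exp_pos.
  apply Rlt_le.
  apply Rmult_lt_0_compat; [apply Rmult_lt_0_compat; [apply Rmult_lt_0_compat|]|
                            apply Rmult_lt_0_compat]; lra.
Qed.

(* Since [x -> x^(-c/b)] is decreasing, [Delta > Delta_hat] lowers the penalty. *)
Lemma penalty_Delta_lt g : 0 < g -> penalty (DeltaF a b c P) g < penalty (Delta_hat a b c P) g.
Proof.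
  intros Hg. destruct (exponents_order g Hg) as [Hv _].
  assert (Hpow : Rpower (DeltaF a b c P g) (- c / b) < Rpower (Delta_hat a b c P g) (- c / b)).
  { unfold Rpower. apply exp_increasing.
    assert (Hl : ln (Delta_hat a b c P g) < ln (DeltaF a b c P g)).
    { apply ln_increasing; [unfold Delta_hat; apply exp_pos|apply Delta_gt_Delta_hat, Hg]. }
    assert (0 < c / b) by (apply Rdiv_lt_0_compat; lra).
    unfold Rdiv in *. rewrite Ropp_mult_distr_l_reverse. nra. }
  unfold penalty, exp_density.
  assert (0 < a * b / (g * P)) by (apply Rdiv_lt_0_compat; nra).
  assert (1 < exp (g * P / (a * (b + c)))) by (rewrite <- exp_0; apply exp_increasing; lra).
  assert (0 < 1 / mu * exp (- g / mu))
    by (apply Rmult_lt_0_compat; [apply Rdiv_lt_0_compat; lra|apply exp_pos]).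
  apply Rmult_lt_compat_r; [lra|]. apply Rmult_lt_compat_r; [lra|].
  apply Rmult_lt_compat_l; lra.
Qed.

(* [Delta > 0], so its penalty is continuous on (0,+oo). *)
Lemma continuous_penalty_Delta g : 0 < g -> continuous (penalty (DeltaF a b c P)) g.
Proof.
  intros Hg. destruct (exponents_order g Hg) as [Hv _].
  assert (HD : 0 < DeltaF a b c P g)
    by (apply Rlt_trans with (Delta_hat a b c P g);
        [unfold Delta_hat; apply exp_pos|apply Delta_gt_Delta_hat, Hg]).
  assert (1 < exp (g * P / (a * (b + c)))) by (rewrite <- exp_0; apply exp_increasing; lra).
  apply (@ex_derive_continuous R_AbsRing R_NormedModule).
  unfold penalty, exp_density, Rpower. unfold DeltaF, lam_a, lamt_a, Rdiv in *.
  auto_derive. repeat split; try lra.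
  - apply Rmult_integral_contrapositive; split; lra.
  - unfold Rminus in HD. exact HD.
Qed.

Definition al : R := 1 / mu.
Definition be : R := 1 / mu + P / (a * (b + c)).
Definition C : R := a * b / (P * mu).

Lemma al_pos : 0 < al.
Proof. unfold al. apply Rdiv_lt_0_compat; lra. Qed.

Lemma al_lt_be : al < be.
Proof. unfold al, be. assert (0 < P / (a * (b + c))) by (apply Rdiv_lt_0_compat; nra). lra. Qed.

Lemma C_pos : 0 < C.
Proof. unfold C. apply Rdiv_lt_0_compat; nra. Qed.

(* For [D = Delta_hat] the factor [Delta_hat^(-c/b) (e^v - 1)] equals
   [1 - e^(-v)], so the penalty is a multiple of a Frullani integrand. *)
Lemma penalty_hat_frullani g : 0 < g -> penalty (Delta_hat a b c P) g = C * frullani al be g.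
Proof.
  intros Hg. unfold penalty, Rpower, C, frullani, al, be, exp_density.
  rewrite Delta_hat_exp, ln_exp.
  set (v := g * P / (a * (b + c))).
  replace (- c / b * (g * P / (a * c) - v)) with (- v)
    by (unfold v; field; repeat split; try lra; nra).
  replace (- ((1 / mu + P / (a * (b + c))) * g)) with (- v + - g / mu)
    by (unfold v; field; repeat split; try lra; nra).
  replace (- (1 / mu * g)) with (- g / mu) by (field; lra).
  rewrite exp_plus, exp_Ropp.
  assert (0 < exp v) by apply exp_pos.
  field. repeat split; try lra; nra.
Qed.

Lemma penalty_hat_integral : is_RInt_pos (penalty (Delta_hat a b c P)) (C * ln (be / al)).
Proof.
  apply (is_RInt_pos_ext (fun g => C * frullani al be g)).
  - intros g Hg. symmetry. apply penalty_hat_frullani, Hg.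
  - exact (is_RInt_gen_scal _ C _ (frullani_integral _ _ al_pos al_lt_be)).
Qed.

Lemma J_Delta_hat_value : J_is a b c P mu (Delta_hat a b c P) (1 - C * ln (be / al)).
Proof.
  apply (is_RInt_pos_ext (fun g => minus (exp_density mu g) (penalty (Delta_hat a b c P) g))).
  - intros g _. symmetry. apply J_integrand_split.
  - exact (is_RInt_gen_minus _ _ _ _ (exp_density_integral mu hmu) penalty_hat_integral).
Qed.

(* Third claim: the gap [penalty Delta_hat - penalty Delta] is positive,
   continuous and dominated by the hat penalty, so it has a positive integral
   [I] and [J[Delta] = J[Delta_hat] + I]. *)
Lemma J_Delta_value :
  exists I, 0 < I /\ J_is a b c P mu (DeltaF a b c P) (1 - C * ln (be / al) + I).
Proof.
  set (gap := fun g => C * frullani al be g - penalty (DeltaF a b c P) g).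
  assert (Hfr_cont : forall g, 0 < g -> continuous (fun g => C * frullani al be g) g).
  { intros g Hg. apply (@ex_derive_continuous R_AbsRing R_NormedModule).
    unfold frullani. auto_derive. lra. }
  destruct (is_RInt_pos_dominated gap (fun g => C * frullani al be g) (C * ln (be / al)))
    as [I [HI HIpos]].
  - intros g Hg. apply (continuous_minus (V:=R_NormedModule)).
    + apply Hfr_cont, Hg.
    + apply continuous_penalty_Delta, Hg.
  - exact Hfr_cont.
  - intros g Hg. unfold gap. rewrite <- penalty_hat_frullani by exact Hg.
    generalize (penalty_Delta_lt g Hg) (penalty_nonneg (DeltaF a b c P) g Hg). lra.
  - intros x y Hx Hxy.
    rewrite (RInt_scal (V:=R_CompleteNormedModule) (frullani al be)).
    + apply Rmult_le_compat_l; [apply Rlt_le, C_pos|].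
      apply RInt_frullani_le; [exact al_pos|exact al_lt_be|lra|lra].
    + apply ex_RInt_pos; [apply continuous_frullani|lra|lra].
  - exists I. split; [exact HIpos|]. unfold J_is.
    apply (is_RInt_pos_ext
             (fun g => minus (exp_density mu g) (minus (C * frullani al be g) (gap g)))).
    + intros g _. rewrite J_integrand_split. unfold gap, minus, plus, opp; simpl. ring.
    + replace (1 - C * ln (be / al) + I) with (minus 1 (minus (C * ln (be / al)) I))
        by (unfold minus, plus, opp; simpl; ring).
      apply (is_RInt_gen_minus _ _ _ _ (exp_density_integral mu hmu)).
      apply (is_RInt_gen_minus _ _ _ _
               (is_RInt_gen_scal _ C _ (frullani_integral _ _ al_pos al_lt_be)) HI).
Qed.

Lemma closed_form :
  1 + a * b / (P * mu) * ln (a * (b + c) / (a * (b + c) + P * mu)) = 1 - C * ln (be / al).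
Proof.
  unfold C, al, be.
  replace ((1 / mu + P / (a * (b + c))) / (1 / mu))
    with ((a * (b + c) + P * mu) / (a * (b + c))) by (field; repeat split; try lra; nra).
  rewrite !ln_div by nra. ring.
Qed.

End Model.

Theorem mainTheorem4 (a b c P mu : R)
  (ha : 0 < a) (hb : 0 < b) (hc : 0 < c) (hP : 0 < P) (hmu : 0 < mu) :
  (forall g : R, 0 < g -> DeltaF a b c P g > Delta_hat a b c P g) /\
  J_is a b c P mu (Delta_hat a b c P)
       (1 + a * b / (P * mu) * ln (a * (b + c) / (a * (b + c) + P * mu))) /\
  (exists v : R, J_is a b c P mu (DeltaF a b c P) v /\
       1 + a * b / (P * mu) * ln (a * (b + c) / (a * (b + c) + P * mu)) < v).
Proof.
  rewrite closed_form by assumption.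
  split; [exact (Delta_gt_Delta_hat a b c P ha hb hc hP)|].
  split; [exact (J_Delta_hat_value a b c P mu ha hb hc hP hmu)|].
  destruct (J_Delta_value a b c P mu ha hb hc hP hmu) as [I [HI HJ]].
  exists (1 - C a b P mu * ln (be a b c P mu / al mu) + I). split; [exact HJ|lra].
Qed.
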